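(* Let $\mathscr{F}(r)=\int_0^1 t^{r-1/2}\sqrt{1+t}\,\arcsin t\,\mathrm{d}t$ for nonnegative integers $r$. Then for every nonnegative integer $r$, $$\mathscr{F}(r)=\frac{(-1)^r}{4^r}\frac{\binom{2r}{r}}{r+1}\left(\mathscr{F}(0)+\frac{1}{2}\sum_{k=1}^r\frac{(-1)^k4^k}{\binom{2k}{k}}\,\omega_k\right),$$ where $\omega_k=2\sqrt{2}\pi-2B(k+3/2,1/2)-2B(k+1/2,1/2)$.
   Context: $B(u,v)=\int_0^1 t^{u-1}(1-t)^{v-1}\,\mathrm{d}t$ denotes the Beta function. *)

From HB Require Import structures.
From mathcomp Require Import all_boot all_order all_algebra.
From mathcomp Require Import all_classical all_reals all_analysis.
Set Implicit Arguments. Unset Strict Implicit. Unset Printing Implicit Defensive.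
Import Order.TTheory GRing.Theory Num.Theory.
Local Open Scope classical_set_scope.
Local Open Scope ring_scope.

Definition Beta (R : realType) (u v : R) : R :=
  \int[lebesgue_measure]_(t in `[0%R, 1%R]) (t `^ (u - 1) * (1 - t) `^ (v - 1)).

Definition scrF (R : realType) (r : nat) : R :=
  \int[lebesgue_measure]_(t in `[0%R, 1%R])
     (t `^ (r%:R - 2^-1) * Num.sqrt (1 + t) * asin t).

Definition omega (R : realType) (k : nat) : R :=
  2 * Num.sqrt 2 * pi - 2 * Beta (k%:R + 3 / 2) (2^-1)
    - 2 * Beta (k%:R + 2^-1) (2^-1).

(* For 0 < t < 1 the function H_r(t) = 2 t^(r+1/2) (1+t)^(3/2) arcsin t has derivative
     (2r+4) t^(r+1/2) sqrt(1+t) arcsin t + (2r+1) t^(r-1/2) sqrt(1+t) arcsin t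
     + 2 t^(r+3/2) (1-t)^(-1/2) + 2 t^(r+1/2) (1-t)^(-1/2),
   a nonnegative combination of the integrands of F(r+1), F(r), B(r+5/2,1/2) and
   B(r+3/2,1/2).  Since H_r(0) = 0 and H_r(1) = 2 sqrt 2 pi, integrating over (0,1)
   (an improper integral at both ends) gives every term finite and
     (2r+4) F(r+1) + (2r+1) F(r) = omega_(r+1).
   With (r+1) C(2r+2,r+1) = 2 (2r+1) C(2r,r), the quantity (-4)^r (r+1) F(r) / C(2r,r)
   increases by (-4)^(r+1) omega_(r+1) / (2 C(2r+2,r+1)) at each step, and summing these
   increments is the closed form. *)

From HB Require Import structures.
From mathcomp Require Import all_boot all_order all_algebra.
From mathcomp Require Import all_classical all_reals all_analysis.
From mathcomp Require Import ring lra measurable_realfun.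
Import Order.TTheory GRing.Theory Num.Theory.
Import numFieldNormedType.Exports.
Local Open Scope classical_set_scope.
Local Open Scope ring_scope.

Section improper_FTC.
Context {R : realType}.
Local Notation mu := (@lebesgue_measure R).
Variables (a b : R).
Hypothesis ab : a < b.

(* ]a, b[ is exhausted by the compact intervals K n, on each of which the classical
   FTC applies; monotone convergence then passes to the limit. *)

Let e n : R := (b - a) / 4 * harmonic n.

Let e_gt0 n : 0 < e n.
Proof. by rewrite mulr_gt0 ?divr_gt0 ?harmonic_gt0 ?subr_gt0. Qed.

Let e_le n : e n <= (b - a) / 4.
Proof.
apply: ler_piMr; first by rewrite divr_ge0 // subr_ge0 ltW.
by rewrite /harmonic /= invf_le1 ?ler1n ?ltr0n.
Qed.

Let e_nonincreasing m n : (m <= n)%N -> e n <= e m.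
Proof.
move=> mn; rewrite ler_pM2l ?divr_gt0 ?subr_gt0 // /harmonic /=.
by rewrite lef_pV2 ?posrE ?ltr0n // ler_nat.
Qed.

Let cvg_e : e n @[n --> \oo] --> 0.
Proof.
by rewrite -(mulr0 ((b - a) / 4)); apply: cvgM; [exact: cvg_cst | exact: cvg_harmonic].
Qed.

Let K n : set R := `[a + e n, b - e n].

Let K_lt n : a + e n < b - e n.
Proof. by have := e_le n; have := e_gt0 n; lra. Qed.

Let K_sub n : K n `<=` `]a, b[.
Proof.
move=> x; rewrite /K /= !in_itv /= => /andP[? ?].
by apply/andP; split; have := e_gt0 n; lra.
Qed.

Let nondecreasing_K : {homo K : n m / (n <= m)%N >-> (n <= m)%O}.
Proof.
move=> m n /e_nonincreasing mn; rewrite subsetEset.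
by apply: subset_itv; rewrite bnd_simp; lra.
Qed.

Let bigcup_K : \bigcup_n K n = `]a, b[%classic.
Proof.
apply/seteqP; split=> [x [n _ /K_sub] //|x].
rewrite /= in_itv /= => /andP[ax xb].
have d0 : 0 < Num.min (x - a) (b - x) by rewrite lt_min !subr_gt0 ax xb.
have [N _ /(_ N (leqnn N))] := (cvgrPdist_lt _ _).1 cvg_e _ d0.
rewrite /= sub0r normrN gtr0_norm // lt_min => /andP[? ?].
by exists N => //; rewrite /K /= in_itv /=; apply/andP; split; lra.
Qed.

Lemma ge0_continuous_FTC2_oo (f F : R -> R) :
  {in `]a, b[, forall x, 0 <= f x} -> {in `]a, b[, continuous f} ->
  derivable_oo_LRcontinuous F a b -> {in `]a, b[, (F^`())%classic =1 f} ->
  (\int[mu]_(x in `[a, b]) (f x)%:E = (F b - F a)%:E)%E.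
Proof.
move=> f_ge0 cf dF dFE.
have mf : measurable_fun `]a, b[ f.
  by apply: open_continuous_measurable_fun => //; exact/in_continuous_mksetP.
rewrite -integral_itv_obnd_cbnd; last first.
  by apply/measurable_EFinP; exact: (measurable_fun_itv_bndo_bndcP _ _ _).1 mf.
rewrite -integral_itv_bndo_bndc; last exact/measurable_EFinP.
have FTC_K n : (\int[mu]_(x in K n) (f x)%:E = (F (b - e n) - F (a + e n))%:E)%E.
  have Kab x : x \in `]a + e n, b - e n[ -> x \in `]a, b[.
    by rewrite !in_itv /= => /andP[? ?]; apply/andP; split; have := e_gt0 n; lra.
  rewrite EFinB; apply: continuous_FTC2 (K_lt n) _ _ _.
  - by apply: continuous_in_subspaceT => x /set_mem/K_sub; exact: cf.
  - apply: derivable_oo_continuousW (K_lt n) _ dF.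
    by apply: subset_itv; rewrite bnd_simp; have := e_gt0 n; lra.
  - by move=> x /Kab; exact: dFE.
have lim_int : ((\int[mu]_(x in K n) (f x)%:E) @[n --> \oo] -->
    \int[mu]_(x in `]a, b[) (f x)%:E)%E.
  rewrite -bigcup_K; apply: ge0_nondecreasing_set_cvg_integral.
  - exact: nondecreasing_K.
  - by move=> n; exact: measurable_itv.
  - by move=> n; apply/measurable_EFinP; exact: measurable_funS (K_sub n) mf.
  - by move=> n x /K_sub xab; rewrite lee_fin f_ge0.
have [_ Fa Fb] := dF.
have lim_F : (F (b - e n) - F (a + e n))%:E @[n --> \oo] --> (F b - F a)%:E.
  apply: cvg_EFin; first exact: nearW.
  apply: cvgB.
    move/cvg_at_leftP : Fb; apply; split; first by move=> n; have := e_gt0 n; lra.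
    by rewrite -[X in _ --> X]subr0; apply: cvgB; [exact: cvg_cst | exact: cvg_e].
  move/cvg_at_rightP : Fa; apply; split; first by move=> n; have := e_gt0 n; lra.
  by rewrite -[X in _ --> X]addr0; apply: cvgD; [exact: cvg_cst | exact: cvg_e].
by rewrite (eq_cvg _ _ FTC_K) in lim_int; exact: cvg_unique lim_int lim_F.
Qed.

End improper_FTC.

Section asin_facts.
Context {R : realType}.

Lemma asin_ge0 (t : R) : 0 <= t <= 1 -> 0 <= asin t.
Proof.
move=> /andP[t0 t1]; rewrite leNgt; apply/negP => asin_lt0.
have tI : -1 <= t <= 1 by apply/andP; split; lra.
have : 0 < sin (- asin t).
  apply: sin_gt0_pi; rewrite oppr_gt0 asin_lt0 /=.
  by have := asin_geNpi2 tI; have := @pi_gt0 R; lra.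
by rewrite sinN asinK ?inE //; lra.
Qed.

Lemma asin1 : asin (1 : R) = pi / 2.
Proof.
rewrite -{1}sin_pihalf sinK // in_itv /=.
by have := @pi_gt0 R; lra.
Qed.

Lemma cvg_at_left_asin1 : asin x @[x --> (1 : R)^'-] --> pi / 2.
Proof.
have asin_cont : {within `[-1, 1], continuous (@asin R)}.
  have := @segment_can_le_continuous R (- (pi / 2)) (pi / 2) sin asin.
  rewrite sinN sin_pihalf; apply; first by have := @pi_gt0 R; lra.
    by apply: continuous_subspaceT => x; exact: continuous_sin.
  exact: sinK.
have m1 : (-1 : R) < 1 by lra.
by rewrite -asin1; have [_ _] := (continuous_within_itvP _ m1).1 asin_cont.
Qed.

End asin_facts.

Lemma continuous_powR {R : realType} (p x : R) : 0 < x -> {for x, continuous (@powR R ^~ p)}.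
Proof.
by move=> x0; have [/derivable1_diffP/differentiable_continuous] := is_derive1_powR p x0.
Qed.

Section ge0_measurable_integral.
Context {R : realType}.
Local Notation mu := (@lebesgue_measure R).
Variables (D : set R) (mD : measurable D).

Definition ge0_measurable (u : R -> R) :=
  measurable_fun D u /\ forall x, D x -> 0 <= u x.

Lemma ge0_measurableD (u v : R -> R) :
  ge0_measurable u -> ge0_measurable v -> ge0_measurable (fun x => u x + v x).
Proof.
move=> [m_u u_ge0] [m_v v_ge0]; split; first exact: measurable_funD.
by move=> x Dx; rewrite addr_ge0 ?u_ge0 ?v_ge0.
Qed.

Lemma ge0_measurableZ (c : R) (u : R -> R) :
  0 <= c -> ge0_measurable u -> ge0_measurable (fun x => c * u x).
Proof.
move=> c_ge0 [m_u u_ge0]; split; first exact: measurable_funM.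
by move=> x Dx; rewrite mulr_ge0 ?u_ge0.
Qed.

Lemma ge0_integral_EFinD (u v : R -> R) : ge0_measurable u -> ge0_measurable v ->
  (\int[mu]_(x in D) (u x + v x)%:E =
   \int[mu]_(x in D) (u x)%:E + \int[mu]_(x in D) (v x)%:E)%E.
Proof.
move=> [m_u u_ge0] [m_v v_ge0]; under eq_integral do rewrite EFinD.
by apply: ge0_integralD => //; exact/measurable_EFinP.
Qed.

Lemma ge0_integral_EFinZl (c : R) (u : R -> R) : 0 <= c -> ge0_measurable u ->
  (\int[mu]_(x in D) (c * u x)%:E = c%:E * \int[mu]_(x in D) (u x)%:E)%E.
Proof.
move=> c_ge0 [m_u u_ge0]; under eq_integral do rewrite EFinM.
by apply: ge0_integralZl_EFin => //; exact/measurable_EFinP.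
Qed.

End ge0_measurable_integral.

Lemma continuous_oo_measurable_cc {R : realType} (a b : R) (f : R -> R) :
  {in `]a, b[, continuous f} -> measurable_fun `[a, b] f.
Proof.
move=> cf; apply: (@measurable_fun_itv_cc _ _ _ false true).
by apply: open_continuous_measurable_fun => //; exact/in_continuous_mksetP.
Qed.

Lemma fin_numZl_EFin {R : realType} (c : R) (x : \bar R) : c != 0 ->
  (c%:E * x \is a fin_num)%E = (x \is a fin_num).
Proof.
move=> c0; apply/idP/idP => [cx|x_fin]; last by rewrite fin_numM.
by rewrite -[x]mul1e -(mulVf c0) EFinM -muleA fin_numM.
Qed.

Section scrF_recurrence.
Context {R : realType}.
Local Notation mu := (@lebesgue_measure R).

Definition scrF_integrand (n : nat) (t : R) :=
  t `^ (n%:R - 2^-1) * Num.sqrt (1 + t) * asin t.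

Definition Beta_integrand (u v t : R) := t `^ (u - 1) * (1 - t) `^ (v - 1).

Lemma continuous_scrF_integrand n : {in `]0, 1[, continuous (scrF_integrand n)}.
Proof.
move=> x; rewrite in_itv /= => /andP[x0 x1]; rewrite /scrF_integrand.
apply: cvgM; last by apply: continuous_asin; lra.
apply: cvgM; first exact: continuous_powR.
apply: continuous_comp; last exact: sqrt_continuous.
by apply: cvgD; [exact: cvg_cst | exact: cvg_id].
Qed.

Lemma continuous_Beta_integrand u v : {in `]0, 1[, continuous (Beta_integrand u v)}.
Proof.
move=> x; rewrite in_itv /= => /andP[x0 x1]; rewrite /Beta_integrand.
apply: cvgM; first exact: continuous_powR.
have c1B : {for x, continuous (fun t : R => 1 - t)}.
  by apply: cvgB; [exact: cvg_cst | exact: cvg_id].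
have := continuous_comp c1B (@continuous_powR R (v - 1) (1 - x) _); apply; lra.
Qed.

Lemma ge0_measurable_scrF_integrand n : ge0_measurable `[0, 1] (scrF_integrand n).
Proof.
split; first exact: continuous_oo_measurable_cc (continuous_scrF_integrand n).
move=> t; rewrite /= in_itv /= => t01.
by rewrite !mulr_ge0 ?powR_ge0 ?sqrtr_ge0 ?asin_ge0.
Qed.

Lemma ge0_measurable_Beta_integrand u v : ge0_measurable `[0, 1] (Beta_integrand u v).
Proof.
split; first exact: continuous_oo_measurable_cc (continuous_Beta_integrand u v).
by move=> t _; rewrite mulr_ge0 ?powR_ge0.
Qed.

Variable r : nat.

Definition scrF_rec_primitive (t : R) :=
  2 * t `^ (r%:R + 2^-1) * (1 + t) * Num.sqrt (1 + t) * asin t.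

Definition scrF_rec_integrand (t : R) :=
  (2 * r%:R + 4) * scrF_integrand r.+1 t + (2 * r%:R + 1) * scrF_integrand r t
  + 2 * Beta_integrand (r.+1%:R + 3 / 2) 2^-1 t
  + 2 * Beta_integrand (r.+1%:R + 2^-1) 2^-1 t.

Lemma is_derive_scrF_rec_primitive (t : R) : 0 < t < 1 ->
  is_derive t 1 scrF_rec_primitive (scrF_rec_integrand t).
Proof.
move=> /andP[t0 t1].
have d1D : is_derive t 1 (fun x : R => 1 + x) 1 by apply: is_derive_eq; rewrite add0r mulr1.
have dsqrt1D := is_derive1_comp (is_derive1_sqrt (_ : 0 < 1 + t)) d1D.
have dasin := is_derive1_asin (_ : -1 < t < 1).
apply: is_derive_eq.
  have := is_deriveM (is_deriveM (is_deriveM (is_deriveM (is_derive_cst (2 : R) t 1)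
    (is_derive1_powR (r%:R + 2^-1) t0)) d1D) (dsqrt1D _)) (dasin _); apply; lra.
rewrite !fctE -![_ *: _]/(_ * _) /=.
have powS x : t `^ (x + 1) = t * t `^ x.
  by rewrite powRD ?(gt_eqF t0) ?implybT // powRr1 ?ltW // mulrC.
have sqrt1B2 : Num.sqrt (1 - t ^+ 2) = Num.sqrt (1 - t) * Num.sqrt (1 + t).
  by rewrite -sqrtrM ?subr_ge0 ?ltW //; congr Num.sqrt; ring.
have pow1B : (1 - t) `^ (2^-1 - 1) = (Num.sqrt (1 - t))^-1.
  have -> : (2^-1 - 1 : R) = - 2^-1 by field.
  by rewrite powRN powR12_sqrt // subr_ge0 ltW.
set P := t `^ (r%:R - 2^-1).
have -> : r%:R + 2^-1 - 1 = r%:R - 2^-1 :> R by field.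
have -> : r%:R + 2^-1 = r%:R - 2^-1 + 1 :> R by field.
rewrite /scrF_rec_integrand /scrF_integrand /Beta_integrand pow1B sqrt1B2.
have -> : r.+1%:R - 2^-1 = r%:R - 2^-1 + 1 :> R by rewrite -natr1; field.
have -> : r.+1%:R + 3 / 2 - 1 = r%:R - 2^-1 + 1 + 1 :> R by rewrite -natr1; field.
have -> : r.+1%:R + 2^-1 - 1 = r%:R - 2^-1 + 1 :> R by rewrite -natr1; field.
rewrite !powS -/P.
have S2 : Num.sqrt (1 + t) ^+ 2 = 1 + t by rewrite sqr_sqrtr //; lra.
have S0 : Num.sqrt (1 + t) != 0 by rewrite sqrtr_eq0 -ltNge; lra.
have Q0 : Num.sqrt (1 - t) != 0 by rewrite sqrtr_eq0 -ltNge; lra.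
(* With S = sqrt (1 + t), both sides are rational in S, sqrt (1 - t), P and asin t. *)
move: S2 S0 Q0; move: (Num.sqrt (1 + t)) (Num.sqrt (1 - t)) => S Q S2 S0 Q0.
rewrite (_ : t = S ^+ 2 - 1); last by rewrite S2; ring.
by field; rewrite S0 Q0.
Qed.

Lemma scrF_rec_primitive0 : scrF_rec_primitive 0 = 0.
Proof.
by rewrite /scrF_rec_primitive powR0 ?mulr0 ?mul0r.
Qed.

Lemma scrF_rec_primitive1 : scrF_rec_primitive 1 = 2 * Num.sqrt 2 * pi.
Proof. by rewrite /scrF_rec_primitive powR1 asin1; field. Qed.

Lemma derivable_oo_LRcontinuous_scrF_rec_primitive :
  derivable_oo_LRcontinuous scrF_rec_primitive 0 1.
Proof.
have c1D (x : R) : {for x, continuous (fun t : R => 1 + t)}.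
  by apply: cvgD; [exact: cvg_cst | exact: cvg_id].
have csqrt1D (x : R) : {for x, continuous (fun t : R => Num.sqrt (1 + t))}.
  by apply: continuous_comp (c1D x) _; exact: sqrt_continuous.
split.
- move=> x; rewrite in_itv /= => x01.
  by have [] := is_derive_scrF_rec_primitive _ x01.
- have p0 : 0 < r%:R + 2^-1 :> R by rewrite ltr_wpDl.
  have := cvgM (cvgM (cvgM (cvgM (cvg_cst (2 : R)) (powR_cvg0 p0))
    (cvg_at_right_filter (c1D 0))) (cvg_at_right_filter (csqrt1D 0)))
    (cvg_at_right_filter (continuous_asin (_ : -1 < 0 < 1))).
  by rewrite scrF_rec_primitive0 mulr0 !mul0r; apply; lra.
- have := cvgM (cvgM (cvgM (cvgM (cvg_cst (2 : R))
    (cvg_at_left_filter (continuous_powR (r%:R + 2^-1) 1 ltr01)))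
    (cvg_at_left_filter (c1D 1))) (cvg_at_left_filter (csqrt1D 1)))
    cvg_at_left_asin1.
  by rewrite /scrF_rec_primitive asin1; apply.
Qed.

Lemma ge0_measurable_scrF_rec_integrand : ge0_measurable `[0, 1] scrF_rec_integrand.
Proof.
have r0 : 0 <= r%:R :> R by [].
rewrite /scrF_rec_integrand; repeat apply: ge0_measurableD; apply: ge0_measurableZ;
  by [lra | exact: ge0_measurable_scrF_integrand | exact: ge0_measurable_Beta_integrand].
Qed.

Lemma continuous_scrF_rec_integrand : {in `]0, 1[, continuous scrF_rec_integrand}.
Proof.
move=> x x01; repeat apply: cvgD; apply: cvgM; try exact: cvg_cst;
  by [exact: continuous_scrF_integrand | exact: continuous_Beta_integrand].
Qed.

Lemma integral_scrF_rec_integrand :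
  (\int[mu]_(t in `[0%R, 1%R]) (scrF_rec_integrand t)%:E = (2 * Num.sqrt 2 * pi)%:E)%E.
Proof.
rewrite -[in RHS]scrF_rec_primitive1 -[in RHS](subr0 (scrF_rec_primitive 1)) -[in RHS]scrF_rec_primitive0.
apply: (ge0_continuous_FTC2_oo _ _ ltr01 _ _ _ continuous_scrF_rec_integrand
  derivable_oo_LRcontinuous_scrF_rec_primitive).
- move=> x; rewrite in_itv /= => /andP[x0 x1].
  by apply: ge0_measurable_scrF_rec_integrand.2; rewrite /= in_itv /= !ltW.
- move=> x /[!in_itv] /= /is_derive_scrF_rec_primitive dF.
  by rewrite derive1E derive_val.
Qed.

Lemma scrF_recurrence :
  (2 * r%:R + 4) * scrF R r.+1 + (2 * r%:R + 1) * scrF R r = omega R r.+1.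
Proof.
have r0 : 0 <= r%:R :> R by [].
pose I u := (\int[mu]_(t in `[0%R, 1%R]) (u t)%:E)%E.
have lin : I scrF_rec_integrand =
    ((2 * r%:R + 4)%:E * I (scrF_integrand r.+1) + (2 * r%:R + 1)%:E * I (scrF_integrand r)
     + 2%:E * I (Beta_integrand (r.+1%:R + 3 / 2) 2^-1)
     + 2%:E * I (Beta_integrand (r.+1%:R + 2^-1) 2^-1))%E.
  rewrite /I /scrF_rec_integrand !ge0_integral_EFinD ?ge0_integral_EFinZl //;
    repeat apply: ge0_measurableD; try apply: ge0_measurableZ;
    by [lra | exact: ge0_measurable_scrF_integrand | exact: ge0_measurable_Beta_integrand].
have E : I scrF_rec_integrand = (2 * Num.sqrt 2 * pi)%:E := integral_scrF_rec_integrand.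
have : I scrF_rec_integrand \is a fin_num by rewrite E.
rewrite lin !fin_numD !fin_numZl_EFin ?gt_eqF;
  [move=> /andP[/andP[/andP[f1 f2] f3] f4] | lra..].
have eF n : scrF R n = fine (I (scrF_integrand n)) by [].
have eB u v : Beta u v = fine (I (Beta_integrand u v)) by [].
move: E; rewrite /omega !eF !eB lin -(fineK f1) -(fineK f2) -(fineK f3) -(fineK f4).
rewrite -!EFinM -!EFinD => -[sum_eq] /=.
by rewrite -sum_eq; ring.
Qed.

End scrF_recurrence.

Lemma central_binomial_succ (r : nat) :
  ('C(r.+1.*2, r.+1) * r.+1 = 2 * r.*2.+1 * 'C(r.*2, r))%N.
Proof.
have bin_diag : ('C(r.*2.+1, r) * r.+1 = r.*2.+1 * 'C(r.*2, r))%N.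
  by rewrite mulnC (mul_bin_down r.*2.+1 r) -addnn -addSn addnK.
rewrite mulnC -mul_bin_diag doubleS /= -[r.*2.+2]/(r.+1).*2 -mul2n.
by rewrite -mulnA [(r.+1 * _)%N]mulnC bin_diag mulnA.
Qed.

Section central_binomial_recurrence.
Variables (R : numFieldType) (s w : nat -> R).
Hypothesis s_rec : forall r, (2 * r%:R + 4) * s r.+1 + (2 * r%:R + 1) * s r = w r.+1.

Let a r := (-1) ^+ r * 4 ^+ r * r.+1%:R / 'C(r.*2, r)%:R * s r.

Let central_binomial_neq0 n : 'C(n.*2, n)%:R != 0 :> R.
Proof. by rewrite pnatr_eq0 -lt0n bin_gt0 -addnn leq_addr. Qed.

Let a_succ r : a r.+1 - a r =
  2^-1 * ((-1) ^+ r.+1 * 4 ^+ r.+1 / 'C(r.+1.*2, r.+1)%:R * w r.+1).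
Proof.
have r1 : r%:R + 1 != 0 :> R by rewrite natr1 pnatr_eq0.
have r2 : 2 * r%:R + 1 != 0 :> R by rewrite -natrM natr1 pnatr_eq0.
have r4 : 2 * r%:R + 4 != 0 :> R by rewrite -natrM -natrD pnatr_eq0 addn4.
have C_succ : 'C(r.+1.*2, r.+1)%:R = 2 * (2 * r%:R + 1) / (r%:R + 1) * 'C(r.*2, r)%:R :> R.
  apply: (mulIf r1); rewrite natr1 -[LHS]natrM central_binomial_succ -mul2n -natr1 !natrM.
  by field.
rewrite /a -s_rec C_succ !exprS -[r.+2%:R]natr1 -!natr1.
by field; rewrite r1 central_binomial_neq0 r2.
Qed.

Lemma central_binomial_recurrence_solution r :
  s r = (-1) ^+ r / 4 ^+ r * ('C(r.*2, r)%:R / r.+1%:R) *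
    (s 0 + 2^-1 * \sum_(1 <= k < r.+1) ((-1) ^+ k * 4 ^+ k / 'C(k.*2, k)%:R * w k)).
Proof.
have telescope : s 0 + 2^-1 * \sum_(1 <= k < r.+1)
    ((-1) ^+ k * 4 ^+ k / 'C(k.*2, k)%:R * w k) = a r.
  rewrite big_add1 /= mulr_sumr (@telescope_sumr_eq _ _ _ a) => [|//|k _].
    by rewrite /a /= !expr0 bin0 !mul1r invr1 mul1r addrC subrK.
  by rewrite a_succ.
have nz : [&& 'C(r.*2, r)%:R != 0 :> R, 1 + r%:R != 0 :> R & 4 ^+ r != 0 :> R].
  by rewrite central_binomial_neq0 addrC natr1 pnatr_eq0 expf_neq0.
by rewrite telescope /a -signr_odd; case: odd; rewrite /= ?expr0 ?expr1; field.
Qed.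
End central_binomial_recurrence.

Theorem proposition6p0p1 (R : realType) (r : nat) :
  scrF R r =
  (-1) ^+ r / 4 ^+ r * ('C(r.*2, r)%:R / (r.+1)%:R) *
  (scrF R 0 + 2^-1 * \sum_(1 <= k < r.+1)
      ((-1) ^+ k * 4 ^+ k / 'C(k.*2, k)%:R * omega R k)).
Proof. exact: central_binomial_recurrence_solution scrF_recurrence r. Qed.
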